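(* Let $\nabla$ be a module connection on $M$. The algebra map $\mathsf K_\nabla:\mathsf S_A(M)\to\mathsf T(\mathsf S_A(M))$ given on generators by $\mathsf K_\nabla(a)=a$ and $\mathsf K_\nabla(m)=\mathsf d(m)-U(\nabla(m))$ (explicitly, if $\nabla(m)=\sum_i\mathsf d(a_i)\otimes m_i$ then $\mathsf K_\nabla(m)=\mathsf d(m)-\sum_i m_i\,\mathsf d(a_i)$) is an effective vertical connection on $\mathsf q_M$.
   Context: Fix a commutative ring $R$, a commutative $R$-algebra $A$ and an $A$-module $M$. ''Algebra'' means commutative $R$-algebra and ''algebra map'' means $R$-algebra homomorphism. $\Omega(A)$ is the $A$-module of Kähler differentials of $A$ over $R$, with universal derivation $\mathsf d:A\to\Omega(A)$. A (module) connection on $M$ is an $R$-linear map $\nabla:M\to\Omega(A)\otimes_AM$ such that $\nabla(am)=a\nabla(m)+\mathsf d(a)\otimes_Am$ for all $a\in A$, $m\in M$. Tangent algebras: for an algebra $B$, $\mathsf T(B):=\mathrm{Sym}_B(\Omega(B))$, i.e. the $B$-algebra generated by symbols $\mathsf d(b)$ ($b\in B$) subject to $\mathsf d(b+b')=\mathsf d(b)+\mathsf d(b')$, $\mathsf d(bb')=b\,\mathsf d(b')+b'\,\mathsf d(b)$, $\mathsf d(r1)=0$ ($r\in R$). An algebra map out of $\mathsf T(B)$ is determined by its values on the generators $b$, $\mathsf d(b)$. Write $\mathsf T^2(B)=\mathsf T(\mathsf T(B))$ and denote the universal derivation $\mathsf T(B)\to\mathsf T^2(B)$ by $\mathsf d'$;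 so $\mathsf T^2(B)$ is generated over $B$ by $\mathsf d(b),\mathsf d'(b),\mathsf d'\mathsf d(b)$. For an algebra map $h:X\to Y$, $\mathsf T(h):\mathsf T(X)\to\mathsf T(Y)$ sends $x\mapsto h(x)$ and $\delta_X(x)\mapsto\delta_Y(h(x))$, where $\delta$ denotes the relevant universal derivation ($\mathsf d$ for $B\to\mathsf T(B)$, $\mathsf d'$ for $\mathsf T(B)\to\mathsf T^2(B)$). Algebra maps defined on generators $b\in B$: $\mathsf p_B:B\to\mathsf T(B)$ the inclusion; $0_B:\mathsf T(B)\to B$, $b\mapsto b$, $\mathsf d(b)\mapsto 0$; $\ell_B:\mathsf T^2(B)\to\mathsf T(B)$, $b\mapsto b$, $\mathsf d(b)\mapsto 0$, $\mathsf d'(b)\mapsto0$, $\mathsf d'\mathsf d(b)\mapsto\mathsf d(b)$; $\mathsf c_B:\mathsf T^2(B)\to\mathsf T^2(B)$, $b\mapsto b$, $\mathsf d(b)\mapsto\mathsf d'(b)$, $\mathsf d'(b)\mapsto\mathsf d(b)$, $\mathsf d'\mathsf d(b)\mapsto\mathsf d'\mathsf d(b)$. (These are, read in algebras, the structure maps of the Rosický tangent structure on affine schemes over $R$, i.e. on the opposite of the category of commutative $R$-algebras.) Differential bundle of $M$: $\mathsf S_A(M)$ is the symmetric $A$-algebra on $M$ (generated by $a\in A$, $m\in M$). Algebra maps: $\mathsf q_M:A\to\mathsf S_A(M)$ the inclusion; $\mathsf z_M:\mathsf S_A(M)\to A$, $a\mapsto a$, $m\mapsto 0$; $\lambda_M:\mathsf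 T(\mathsf S_A(M))\to\mathsf S_A(M)$, $a\mapsto a$, $m\mapsto0$, $\mathsf d(a)\mapsto 0$, $\mathsf d(m)\mapsto m$. Let $U:\mathsf T(A)\otimes_A\mathsf S_A(M)\to\mathsf T(\mathsf S_A(M))$ be the algebra map $w\otimes v\mapsto\mathsf T(\mathsf q_M)(w)\,v$ (we regard $\Omega(A)\otimes_AM\subseteq\mathsf T(A)\otimes_A\mathsf S_A(M)$). A vertical connection on $\mathsf q_M$ is an algebra map $\mathsf K:\mathsf S_A(M)\to\mathsf T(\mathsf S_A(M))$ such that (K1) $\lambda_M\circ\mathsf K=\mathrm{id}$; (K2) $\mathsf K(a)=a$ for all $a\in A$; (K3) $\ell_{\mathsf S_A(M)}\circ\mathsf T(\mathsf K)=\mathsf K\circ\lambda_M$; (K4) $\mathsf T(\lambda_M)\circ\mathsf c_{\mathsf S_A(M)}\circ\mathsf T(\mathsf K)=\mathsf K\circ\lambda_M$. It is effective if the algebra map $\mathsf T(A)\otimes_A\mathsf S_A(M)\otimes_A\mathsf S_A(M)\to\mathsf T(\mathsf S_A(M))$, $w\otimes v\otimes u\mapsto\mathsf T(\mathsf q_M)(w)\,v\,\mathsf K(u)$, is an isomorphism. *)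

From HB Require Import structures.
From mathcomp Require Import all_boot all_order all_algebra.
Set Implicit Arguments. Unset Strict Implicit. Unset Printing Implicit Defensive.
Import GRing.Theory.
Local Open Scope ring_scope.

Section Defs.
Variable R : comPzRingType.

Definition is_alg_hom (B C : comAlgType R) (f : B -> C) : Prop :=
  [/\ forall x y, f (x + y) = f x + f y,
      forall x y, f (x * y) = f x * f y,
      f 1 = 1 &
      forall (r : R) x, f (r *: x) = r *: f x].

Definition is_derivation_along (B C : comAlgType R) (f d : B -> C) : Prop :=
  [/\ forall x y, d (x + y) = d x + d y,
      forall (r : R) x, d (r *: x) = r *: d x &
      forall x y, d (x * y) = f x * d y + f y * d x].

Definition uniquely {X Y : Type} (P : (X -> Y) -> Prop) : Prop :=
  (exists g, P g) /\ (forall g1 g2, P g1 -> P g2 -> forall x, g1 x = g2 x).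

(* (TB, p, d) is the tangent algebra T(B) = Sym_B(Omega(B)), with
   p = inclusion B -> T(B) and d the universal derivation:
   algebra maps T(B) -> C correspond to pairs (algebra map f, derivation along f). *)
Definition is_tangent_algebra (B TB : comAlgType R) (p d : B -> TB) : Prop :=
  [/\ is_alg_hom p, is_derivation_along p d &
      forall (C : comAlgType R) (f dl : B -> C),
        is_alg_hom f -> is_derivation_along f dl ->
        uniquely (fun g : TB -> C =>
          [/\ is_alg_hom g, forall b, g (p b) = f b & forall b, g (d b) = dl b])].

Definition is_symmetric_algebra (A : comAlgType R) (M : lmodType A)
    (S : comAlgType R) (q : A -> S) (i : M -> S) : Prop :=
  [/\ is_alg_hom q,
      forall m m', i (m + m') = i m + i m',
      forall (a : A) m, i (a *: m) = q a * i m &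
      forall (C : comAlgType R) (f : A -> C) (g : M -> C),
        is_alg_hom f -> (forall m m', g (m + m') = g m + g m') ->
        (forall (a : A) m, g (a *: m) = f a * g m) ->
        uniquely (fun h : S -> C =>
          [/\ is_alg_hom h, forall a, h (q a) = f a & forall m, h (i m) = g m])].

Definition is_Alinear (A : comAlgType R) (N1 N2 : lmodType A) (g : N1 -> N2) : Prop :=
  (forall x y, g (x + y) = g x + g y) /\ (forall (a : A) x, g (a *: x) = a *: g x).

Definition is_module_derivation (A : comAlgType R) (N : lmodType A) (d : A -> N) : Prop :=
  [/\ forall x y, d (x + y) = d x + d y,
      forall (r : R), d (r%:A) = 0 &
      forall x y, d (x * y) = x *: d y + y *: d x].

Definition is_kaehler (A : comAlgType R) (Om : lmodType A) (d : A -> Om) : Prop :=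
  is_module_derivation d /\
  forall (N : lmodType A) (dl : A -> N), is_module_derivation dl ->
    uniquely (fun g : Om -> N => is_Alinear g /\ forall a, g (d a) = dl a).

Definition is_Abilinear (A : comAlgType R) (N1 N2 N : lmodType A)
    (phi : N1 -> N2 -> N) : Prop :=
  [/\ forall x x' y, phi (x + x') y = phi x y + phi x' y,
      forall x y y', phi x (y + y') = phi x y + phi x y',
      forall (a : A) x y, phi (a *: x) y = a *: phi x y &
      forall (a : A) x y, phi x (a *: y) = a *: phi x y].

Definition is_tensor_product (A : comAlgType R) (N1 N2 T : lmodType A)
    (t : N1 -> N2 -> T) : Prop :=
  is_Abilinear t /\
  forall (N : lmodType A) (phi : N1 -> N2 -> N), is_Abilinear phi ->
    uniquely (fun g : T -> N => is_Alinear g /\ forall x y, g (t x y) = phi x y).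

(* (P, j1, j2, j3) is the tensor product of commutative A-algebras
   X1 (x)_A X2 (x)_A X3 (structure maps s1 s2 s3 : A -> Xk), i.e. the coproduct
   of A-algebras. *)
Definition is_algebra_tensor3 (A X1 X2 X3 P : comAlgType R)
    (s1 : A -> X1) (s2 : A -> X2) (s3 : A -> X3)
    (j1 : X1 -> P) (j2 : X2 -> P) (j3 : X3 -> P) : Prop :=
  [/\ is_alg_hom j1 /\ is_alg_hom j2 /\ is_alg_hom j3,
      forall a, j1 (s1 a) = j2 (s2 a),
      forall a, j2 (s2 a) = j3 (s3 a) &
      forall (C : comAlgType R) (g1 : X1 -> C) (g2 : X2 -> C) (g3 : X3 -> C),
        is_alg_hom g1 -> is_alg_hom g2 -> is_alg_hom g3 ->
        (forall a, g1 (s1 a) = g2 (s2 a)) -> (forall a, g2 (s2 a) = g3 (s3 a)) ->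
        uniquely (fun h : P -> C =>
          [/\ is_alg_hom h, forall x, h (j1 x) = g1 x,
              forall x, h (j2 x) = g2 x & forall x, h (j3 x) = g3 x])].

Definition is_module_connection (A : comAlgType R) (M Om OM : lmodType A)
    (d : A -> Om) (t : Om -> M -> OM) (nabla : M -> OM) : Prop :=
  (forall m m', nabla (m + m') = nabla m + nabla m') /\
  (forall (r : R) m, nabla (r%:A *: m) = r%:A *: nabla m) /\
  (forall (a : A) m, nabla (a *: m) = a *: nabla m + t (d a) m).

End Defs.

From HB Require Import structures.
From mathcomp Require Import all_boot all_order all_algebra ring.
From Stdlib Require Import ClassicalEpsilon.
Set Implicit Arguments. Unset Strict Implicit. Unset Printing Implicit Defensive.
Import GRing.Theory.
Local Open Scope ring_scope.

(* lambda_M kills every d(a), hence the correction term U(nabla m), and sends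
   d(m) to m, so lambda_M o K = id.  The two remaining axioms equate algebra
   maps out of T(S_A(M)), so they are checked on the generators q a, m, d a, d m.
   For effectiveness, the inverse Psi : T(S_A(M)) -> T(A) (x) S_A(M) (x) S_A(M)
   sends b to 1 (x) b (x) 1 and d b to D b, where D is the derivation along
   b |-> 1 (x) b (x) 1 with D a = d a (x) 1 (x) 1 and
   D m = 1 (x) 1 (x) m + sum_i d a_i (x) m_i (x) 1 for nabla m = sum_i d a_i (x) m_i;
   then Psi (K m) = 1 (x) 1 (x) m, and Psi is inverse to Phi on generators. *)

Section AlgHom.
Variables (R : comPzRingType) (B C : comAlgType R) (f : B -> C).
Hypothesis fH : is_alg_hom f.

Lemma alg_homD : {morph f : x y / x + y}. Proof. by case: fH. Qed.
Lemma alg_homM : {morph f : x y / x * y}. Proof. by case: fH. Qed.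
Lemma alg_hom1 : f 1 = 1. Proof. by case: fH. Qed.
Lemma alg_homZ (r : R) : {morph f : x / r *: x}. Proof. by move=> x; case: fH. Qed.
Lemma alg_hom0 : f 0 = 0.
Proof. by apply: (@addrI _ (f 0)); rewrite -alg_homD !addr0. Qed.
Lemma alg_homB : {morph f : x y / x - y}.
Proof.
move=> x y; apply: (@addIr _ (f y)).
by rewrite -alg_homD !subrK.
Qed.
End AlgHom.

Section Derivation.
Variables (R : comPzRingType) (B C : comAlgType R) (f d : B -> C).
Hypothesis dH : is_derivation_along f d.

Lemma derivD : {morph d : x y / x + y}. Proof. by case: dH. Qed.
Lemma derivM x y : d (x * y) = f x * d y + f y * d x. Proof. by case: dH. Qed.
Lemma derivZ (r : R) : {morph d : x / r *: x}. Proof. by move=> x; case: dH. Qed.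
Lemma deriv0 : d 0 = 0.
Proof. by apply: (@addrI _ (d 0)); rewrite -derivD !addr0. Qed.
Lemma derivB : {morph d : x y / x - y}.
Proof.
move=> x y; apply: (@addIr _ (d y)).
by rewrite -derivD !subrK.
Qed.
Lemma deriv1 : is_alg_hom f -> d 1 = 0.
Proof.
move=> fH; have := derivM 1 1; rewrite mulr1 (alg_hom1 fH) mul1r => E.
by apply: (@addrI _ (d 1)); rewrite addr0 -E.
Qed.
End Derivation.

Section Composition.
Variables (R : comPzRingType) (B C D : comAlgType R).

Lemma alg_hom_id : is_alg_hom (@id B). Proof. by []. Qed.

Lemma alg_hom_comp (f : B -> C) (g : C -> D) :
  is_alg_hom f -> is_alg_hom g -> is_alg_hom (fun x => g (f x)).
Proof.
move=> [fD fM f1 fZ] [gD gM g1 gZ].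
by split=> * /=; rewrite ?fD ?gD ?fM ?gM ?f1 ?g1 ?fZ ?gZ.
Qed.

Lemma derivation_postcomp (f d : B -> C) (g : C -> D) :
  is_derivation_along f d -> is_alg_hom g ->
  is_derivation_along (fun x => g (f x)) (fun x => g (d x)).
Proof.
move=> [dD dZ dM] [gD gM _ gZ].
by split=> * /=; rewrite ?dD ?gD ?dZ ?gZ ?dM ?gD ?gM.
Qed.

Lemma derivation_ext (f f' d : B -> C) : f =1 f' ->
  is_derivation_along f d -> is_derivation_along f' d.
Proof. by move=> E [dD dZ dM]; split=> // x y; rewrite dM !E. Qed.
End Composition.

Section DualNumbers.
Variables (R : comPzRingType) (C : comAlgType R).

Record dual := Dual { dual_pair : C * C }.
HB.instance Definition _ := [isNew for dual_pair].
HB.instance Definition _ := [Choice of dual by <:].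
Local Notation re x := (dual_pair x).1.
Local Notation eps x := (dual_pair x).2.

Lemma dual_eq x y : re x = re y -> eps x = eps y -> x = y.
Proof. by case: x y => [[a b]] [[c d]] /= -> ->. Qed.

Definition dual_add x y := Dual (re x + re y, eps x + eps y).
Definition dual_opp x := Dual (- re x, - eps x).
Fact dual_addA : associative dual_add.
Proof. by move=> x y z; apply: dual_eq; rewrite /= addrA. Qed.
Fact dual_addC : commutative dual_add.
Proof. by move=> x y; apply: dual_eq; rewrite /= addrC. Qed.
Fact dual_add0 : left_id (Dual (0, 0)) dual_add.
Proof. by move=> x; apply: dual_eq; rewrite /= add0r. Qed.
Fact dual_addN : left_inverse (Dual (0, 0)) dual_opp dual_add.
Proof. by move=> x; apply: dual_eq; rewrite /= addNr. Qed.
HB.instance Definition _ :=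
  GRing.isZmodule.Build dual dual_addA dual_addC dual_add0 dual_addN.

Definition dual_scale (r : R) x := Dual (r *: re x, r *: eps x).
Fact dual_scaleA r s x : dual_scale r (dual_scale s x) = dual_scale (r * s) x.
Proof. by apply: dual_eq; rewrite /= scalerA. Qed.
Fact dual_scale1 : left_id 1 dual_scale.
Proof. by move=> x; apply: dual_eq; rewrite /= scale1r. Qed.
Fact dual_scaleDr : right_distributive dual_scale +%R.
Proof. by move=> r x y; apply: dual_eq; rewrite /= scalerDr. Qed.
Fact dual_scaleDl x : {morph dual_scale^~ x : r s / r + s}.
Proof. by move=> r s; apply: dual_eq; rewrite /= scalerDl. Qed.
HB.instance Definition _ := GRing.Zmodule_isLmodule.Build R dual
  dual_scaleA dual_scale1 dual_scaleDr dual_scaleDl.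

(* [Dual (x, y)] stands for [x + y eps] with [eps ^+ 2 = 0]. *)
Definition dual_mul x y := Dual (re x * re y, re x * eps y + eps x * re y).
Fact dual_mulA : associative dual_mul.
Proof.
move=> x y z; apply: dual_eq; rewrite /= ?mulrA //.
by rewrite !mulrDr !mulrDl !mulrA addrA.
Qed.
Fact dual_mulC : commutative dual_mul.
Proof.
move=> x y; apply: dual_eq; rewrite /=; first exact: mulrC.
by rewrite addrC; congr (_ + _); apply: mulrC.
Qed.
Fact dual_mul1 : left_id (Dual (1, 0)) dual_mul.
Proof. by move=> x; apply: dual_eq; rewrite /= ?mul1r // mul0r addr0. Qed.
Fact dual_mulDl : left_distributive dual_mul +%R.
Proof. by move=> x y z; apply: dual_eq; rewrite /= !mulrDl // addrACA. Qed.
Fact dual1_neq0 : Dual (1, 0) != 0.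
Proof. by apply/eqP => /(congr1 (fun x => re x)) /= /eqP; rewrite oner_eq0. Qed.
HB.instance Definition _ :=
  GRing.Zmodule_isComNzRing.Build dual
    dual_mulA dual_mulC dual_mul1 dual_mulDl dual1_neq0.
Fact dual_scaleAl (r : R) (x y : dual) : r *: (x * y) = (r *: x) * y.
Proof. by apply: dual_eq; rewrite /= ?scalerAl // scalerDr !scalerAl. Qed.
HB.instance Definition _ := GRing.Lmodule_isLalgebra.Build R dual dual_scaleAl.
HB.instance Definition _ := GRing.Lalgebra_isComAlgebra.Build R dual.

(* Derivations along [f] are the [eps]-parts of algebra maps into [dual]. *)
Lemma alg_hom_dual (B : comAlgType R) (f d : B -> C) :
  is_alg_hom f -> is_derivation_along f d -> is_alg_hom (fun x => Dual (f x, d x)).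
Proof.
move=> fH dH; split=> [x y|x y||r x]; apply: dual_eq => /=.
- exact: (alg_homD fH).
- exact: (derivD dH).
- exact: (alg_homM fH).
- by rewrite (derivM dH) [d x * _]mulrC.
- exact: (alg_hom1 fH).
- exact: (deriv1 dH fH).
- exact: (alg_homZ fH).
- exact: (derivZ dH).
Qed.

Lemma dual_alg_hom_split (B : comAlgType R) (h : B -> dual) : is_alg_hom h ->
  is_alg_hom (fun x => re (h x)) /\
  is_derivation_along (fun x => re (h x)) (fun x => eps (h x)).
Proof.
move=> [hD hM h1 hZ].
by split; split=> *; rewrite ?hD ?hM ?h1 ?hZ //= [X in _ + X = _]mulrC.
Qed.
End DualNumbers.

Inductive addspan (V : zmodType) (G : V -> Prop) : V -> Prop :=
| addspan0 : addspan G 0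
| addspanD x y : addspan G x -> addspan G y -> addspan G (x + y)
| addspan_gen x : G x -> addspan G x.

Lemma additive_eq_on_addspan (V X : zmodType) (G : V -> Prop) (F1 F2 : V -> X) :
  {morph F1 : x y / x + y} -> {morph F2 : x y / x + y} ->
  (forall x, G x -> F1 x = F2 x) -> forall x, addspan G x -> F1 x = F2 x.
Proof.
have F0 (F : V -> X) : {morph F : x y / x + y} -> F 0 = 0.
  by move=> FD; apply: (@addrI _ (F 0)); rewrite -FD !addr0.
move=> F1D F2D EG x; elim=> [|y z _ Ey _ Ez|]; last exact: EG.
- by rewrite (F0 _ F1D) (F0 _ F2D).
- by rewrite F1D F2D Ey Ez.
Qed.

Section Spanned.
Variables (Rg : pzRingType) (V : lmodType Rg).

Record scale_closed := ScaleClosed {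
  scale_closed_pred :> V -> Prop;
  scale_closedZ : forall a x, scale_closed_pred x -> scale_closed_pred (a *: x) }.

Lemma addspanZ (G : scale_closed) a x : addspan G x -> addspan G (a *: x).
Proof.
elim=> [|y z _ Hy _ Hz|y Gy]; first by rewrite scaler0; exact: addspan0.
- by rewrite scalerDr; exact: addspanD.
- by apply: addspan_gen; exact: scale_closedZ.
Qed.

(* A boolean membership predicate is needed to carve out the span as a
   submodule; it is obtained classically. *)
Definition in_addspan (G : scale_closed) : pred V :=
  fun x => if excluded_middle_informative (addspan G x) then true else false.

Lemma in_addspanP (G : scale_closed) x : reflect (addspan G x) (x \in in_addspan G).
Proof.
by rewrite unfold_in /in_addspan; case: excluded_middle_informative => H;
  constructor.
Qed.

Fact in_addspan_closed (G : scale_closed) : GRing.subsemimod_closed (in_addspan G).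
Proof.
split; first split.
- by apply/in_addspanP; exact: addspan0.
- by move=> x y /in_addspanP Hx /in_addspanP Hy; apply/in_addspanP; exact: addspanD.
- by move=> a x /in_addspanP Hx; apply/in_addspanP; exact: addspanZ.
Qed.
HB.instance Definition _ (G : scale_closed) :=
  GRing.isSubmodClosed.Build Rg V (in_addspan G) (in_addspan_closed G).

Record spanned (G : scale_closed) :=
  Spanned { spanned_val : V; _ : spanned_val \in in_addspan G }.
HB.instance Definition _ (G : scale_closed) := [isSub for @spanned_val G].
HB.instance Definition _ (G : scale_closed) := [Choice of spanned G by <:].
HB.instance Definition _ (G : scale_closed) :=
  [SubChoice_isSubLmodule of spanned G by <:].
End Spanned.

Section Generators.
Variables (R : comPzRingType) (A : comAlgType R).

(* The span of the generators receives the universal map into the ambient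
   module, and uniqueness makes the induced map a section of the inclusion. *)
Lemma kaehler_addspan (Om : lmodType A) (dOm : A -> Om) : is_kaehler dOm ->
  forall z, addspan (fun x => exists b a, x = b *: dOm a) z.
Proof.
case=> dH dU.
have GZ c x : (exists b a, x = b *: dOm a) -> exists b a, c *: x = b *: dOm a.
  by case=> b [a ->]; exists (c * b), a; rewrite scalerA.
pose G := ScaleClosed GZ.
have dG a : dOm a \in in_addspan G.
  by apply/(in_addspanP G)/addspan_gen; exists 1, a; rewrite scale1r.
pose d' a : spanned G := Spanned (dG a).
have d'H : is_module_derivation d'.
  by case: dH => dD d0 dM; split=> *; apply: val_inj; rewrite /= ?dD ?d0 ?dM.
have [[g [[gD gZ] gd]] _] := dU _ d' d'H.
have valgK : forall x, val (g x) = x.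
  apply: (dU _ dOm dH).2; split=> //; last by move=> a; rewrite gd.
  by split=> *; rewrite ?gD ?gZ.
by move=> z; apply/(in_addspanP G); rewrite -(valgK z); exact: valP.
Qed.

Lemma tensor_addspan (N1 N2 T : lmodType A) (t : N1 -> N2 -> T) :
  is_tensor_product t -> forall z, addspan (fun z => exists x y, z = t x y) z.
Proof.
case=> tH tU.
have GZ c z : (exists x y, z = t x y) -> exists x y, c *: z = t x y.
  by case: tH => _ _ tZ _ [x [y ->]]; exists (c *: x), y; rewrite tZ.
pose G := ScaleClosed GZ.
have tG x y : t x y \in in_addspan G by apply/(in_addspanP G)/addspan_gen; exists x, y.
pose t' x y : spanned G := Spanned (tG x y).
have t'H : is_Abilinear t'.
  by case: tH => t1 t2 t3 t4; split=> *; apply: val_inj; rewrite /= ?t1 ?t2 ?t3 ?t4.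
have [[g [[gD gZ] gt]] _] := tU _ t' t'H.
have valgK : forall z, val (g z) = z.
  apply: (tU _ t tH).2; split=> //; last by move=> x y; rewrite gt.
  by split=> *; rewrite ?gD ?gZ.
by move=> z; apply/(in_addspanP G); rewrite -(valgK z); exact: valP.
Qed.

Lemma kaehler_tensor_additive_ext (M Om OM : lmodType A) (dOm : A -> Om)
    (tns : Om -> M -> OM) (X : zmodType) (F1 F2 : OM -> X) :
  is_kaehler dOm -> is_tensor_product tns ->
  {morph F1 : x y / x + y} -> {morph F2 : x y / x + y} ->
  (forall b a m, F1 (tns (b *: dOm a) m) = F2 (tns (b *: dOm a) m)) -> F1 =1 F2.
Proof.
move=> HOm Htns F1D F2D Egen z.
apply: (additive_eq_on_addspan F1D F2D _ (tensor_addspan Htns z)).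
move=> _ [x [m ->]]; have [[tD _ _ _] _] := Htns.
apply: (additive_eq_on_addspan (F1 := F1 \o tns^~ m) (F2 := F2 \o tns^~ m) _ _ _
  (kaehler_addspan HOm x)) => [y y'|y y'|_ [b [a ->]]] /=; last exact: Egen.
- by rewrite tD F1D.
- by rewrite tD F2D.
Qed.
End Generators.

Section TangentAlgebra.
Variables (R : comPzRingType) (B TB : comAlgType R) (p d : B -> TB).
Hypothesis HT : is_tangent_algebra p d.

Lemma tangent_ext (C : comAlgType R) (g1 g2 : TB -> C) :
  is_alg_hom g1 -> is_alg_hom g2 ->
  (forall b, g1 (p b) = g2 (p b)) -> (forall b, g1 (d b) = g2 (d b)) -> g1 =1 g2.
Proof.
move=> g1H g2H Ep Ed; case: HT => pH dH TU.
have [_ uniq] := TU C _ _ (alg_hom_comp pH g1H) (derivation_postcomp dH g1H).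
by apply: uniq; split=> // b; rewrite /= ?Ep ?Ed.
Qed.
End TangentAlgebra.

Section SymmetricAlgebra.
Variables (R : comPzRingType) (A : comAlgType R) (M : lmodType A)
  (S : comAlgType R) (qM : A -> S) (iM : M -> S).
Hypothesis HS : is_symmetric_algebra qM iM.

Lemma sym_ext (C : comAlgType R) (g1 g2 : S -> C) :
  is_alg_hom g1 -> is_alg_hom g2 ->
  (forall a, g1 (qM a) = g2 (qM a)) -> (forall m, g1 (iM m) = g2 (iM m)) -> g1 =1 g2.
Proof.
move=> g1H g2H Eq Ei; case: HS => qH iD iZ SU.
have giD m m' : g1 (iM (m + m')) = g1 (iM m) + g1 (iM m').
  by rewrite iD (alg_homD g1H).
have giZ a m : g1 (iM (a *: m)) = g1 (qM a) * g1 (iM m).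
  by rewrite iZ (alg_homM g1H).
have [_ uniq] := SU C _ _ (alg_hom_comp qH g1H) giD giZ.
by apply: uniq; split=> // b; rewrite /= ?Eq ?Ei.
Qed.

Lemma sym_derivation_ext (C : comAlgType R) (f d1 d2 : S -> C) : is_alg_hom f ->
  is_derivation_along f d1 -> is_derivation_along f d2 ->
  (forall a, d1 (qM a) = d2 (qM a)) -> (forall m, d1 (iM m) = d2 (iM m)) -> d1 =1 d2.
Proof.
move=> fH d1H d2H Eq Ei.
have E : (fun x => Dual (f x, d1 x)) =1 (fun x => Dual (f x, d2 x)).
  by apply: (sym_ext (alg_hom_dual fH d1H) (alg_hom_dual fH d2H)) => [a|m];
    rewrite ?Eq ?Ei.
by move=> x; have /(congr1 (fun z => (dual_pair z).2)) := E x.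
Qed.

Lemma sym_derivation_exists (C : comAlgType R) (g : S -> C) (delta : A -> C)
    (mu : M -> C) : is_alg_hom g -> is_derivation_along (g \o qM) delta ->
  {morph mu : m m' / m + m'} ->
  (forall a m, mu (a *: m) = g (qM a) * mu m + delta a * g (iM m)) ->
  exists D : S -> C, [/\ is_derivation_along g D,
    forall a, D (qM a) = delta a & forall m, D (iM m) = mu m].
Proof.
move=> gH deltaH muD muZ; case: HS => qH iD iZ SU.
pose mu2 m := Dual (g (iM m), mu m).
have mu2D m m' : mu2 (m + m') = mu2 m + mu2 m'.
  by apply: dual_eq; rewrite /= ?iD ?(alg_homD gH) ?muD.
have mu2Z a m : mu2 (a *: m) = Dual (g (qM a), delta a) * mu2 m.
  by apply: dual_eq; rewrite /= ?iZ ?(alg_homM gH) // muZ addrC.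
have [[h [hH hq hi]] _] :=
  SU _ _ mu2 (alg_hom_dual (alg_hom_comp qH gH) deltaH) mu2D mu2Z.
have [reH epsH] := dual_alg_hom_split hH.
have reE : (fun x => (dual_pair (h x)).1) =1 g.
  by apply: (sym_ext reH gH) => [a|m] /=; rewrite ?hq ?hi.
exists (fun x => (dual_pair (h x)).2); split=> [|a|m].
- exact: derivation_ext reE epsH.
- by rewrite hq.
- by rewrite hi.
Qed.

Lemma tangent_sym_ext (TS C : comAlgType R) (pS dS : S -> TS) (g1 g2 : TS -> C) :
  is_tangent_algebra pS dS -> is_alg_hom g1 -> is_alg_hom g2 ->
  (forall a, g1 (pS (qM a)) = g2 (pS (qM a))) ->
  (forall m, g1 (pS (iM m)) = g2 (pS (iM m))) ->
  (forall a, g1 (dS (qM a)) = g2 (dS (qM a))) ->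
  (forall m, g1 (dS (iM m)) = g2 (dS (iM m))) -> g1 =1 g2.
Proof.
move=> HTS g1H g2H Epq Epi Edq Edi; have [pH dH _] := HTS.
have Ep : forall b, g1 (pS b) = g2 (pS b).
  exact: (sym_ext (alg_hom_comp pH g1H) (alg_hom_comp pH g2H)).
apply: (tangent_ext HTS g1H g2H Ep).
apply: (sym_derivation_ext (alg_hom_comp pH g1H) (derivation_postcomp dH g1H)) => //.
by apply: (derivation_ext _ (derivation_postcomp dH g2H)) => b /=; rewrite Ep.
Qed.
End SymmetricAlgebra.

Section LmodAlong.
Variables (R : comPzRingType) (A C : comAlgType R).

Record alg_hom_to := AlgHomTo {
  alg_hom_to_fun :> A -> C;
  alg_hom_toP : is_alg_hom alg_hom_to_fun }.

Definition lmod_along (h : alg_hom_to) : Type := C.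
HB.instance Definition _ h := GRing.Zmodule.on (lmod_along h).

Definition scale_along (h : alg_hom_to) (a : A) (x : lmod_along h) : lmod_along h :=
  (h a * x : C).
Arguments scale_along : clear implicits.
Fact scale_alongA h a b x : scale_along h a (scale_along h b x) = scale_along h (a * b) x.
Proof. by rewrite /scale_along (alg_homM (alg_hom_toP h)) mulrA. Qed.
Fact scale_along1 h : left_id 1 (scale_along h).
Proof. by move=> x; rewrite /scale_along (alg_hom1 (alg_hom_toP h)) mul1r. Qed.
Fact scale_alongDr h : right_distributive (scale_along h) +%R.
Proof. by move=> a x y; rewrite /scale_along mulrDr. Qed.
Fact scale_alongDl h x : {morph (scale_along h)^~ x : a b / a + b}.
Proof. by move=> a b; rewrite /scale_along (alg_homD (alg_hom_toP h)) mulrDl. Qed.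
HB.instance Definition _ h := GRing.Zmodule_isLmodule.Build A (lmod_along h)
  (@scale_alongA h) (@scale_along1 h) (@scale_alongDr h) (@scale_alongDl h).

Lemma lmod_alongZ h a (x : lmod_along h) : a *: x = (h a * (x : C) : C).
Proof. by []. Qed.
End LmodAlong.

Lemma kaehler_tensor_pairing (R : comPzRingType) (A C : comAlgType R)
    (M Om OM : lmodType A) (dOm : A -> Om) (tns : Om -> M -> OM)
    (h delta : A -> C) (mu : M -> C) :
  is_kaehler dOm -> is_tensor_product tns ->
  is_alg_hom h -> is_derivation_along h delta ->
  {morph mu : m m' / m + m'} -> (forall a m, mu (a *: m) = h a * mu m) ->
  exists P : OM -> C, [/\ {morph P : x y / x + y},
    forall a x, P (a *: x) = h a * P x &
    forall b a m, P (tns (b *: dOm a) m) = h b * delta a * mu m].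
Proof.
move=> [_ OmU] [_ tU] hH deltaH muD muZ.
pose hh := AlgHomTo hH.
pose dl (a : A) : lmod_along hh := delta a.
have dlH : is_module_derivation dl.
  split=> [x y|r|x y]; rewrite /dl ?lmod_alongZ.
  - exact: (derivD deltaH).
  - by rewrite -[r%:A]/(r *: 1) (derivZ deltaH) (deriv1 deltaH hH) scaler0.
  - by rewrite (derivM deltaH).
have [[dt [[dtD dtZ] dtd]] _] := OmU _ dl dlH.
pose phi (x : Om) m : lmod_along hh := (dt x : C) * mu m.
have phiH : is_Abilinear phi.
  split=> [x x' m|x m m'|a x m|a x m]; rewrite /phi ?lmod_alongZ.
  - by rewrite dtD mulrDl.
  - by rewrite muD mulrDr.
  - by rewrite dtZ lmod_alongZ mulrA.
  - by rewrite muZ mulrCA.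
have [[P [[PD PZ] Pt]] _] := tU _ phi phiH.
exists P; split=> // b a m.
by rewrite Pt /phi dtZ dtd.
Qed.

Section ConnectionMap.
Variables (R : comPzRingType) (A : comAlgType R) (M Om OM : lmodType A)
  (dOm : A -> Om) (tns : Om -> M -> OM)
  (S : comAlgType R) (qM : A -> S) (iM : M -> S)
  (TS : comAlgType R) (pS dS : S -> TS)
  (U : OM -> TS) (nabla : M -> OM) (K : S -> TS).
Hypotheses (HOm : is_kaehler dOm) (Htns : is_tensor_product tns)
  (HS : is_symmetric_algebra qM iM) (HTS : is_tangent_algebra pS dS).
Hypotheses (UD : {morph U : x y / x + y})
  (U_tns : forall b a m, U (tns (b *: dOm a) m) = pS (qM b) * dS (qM a) * pS (iM m)).
Hypotheses (KH : is_alg_hom K) (K_q : forall a, K (qM a) = pS (qM a))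
  (K_i : forall m, K (iM m) = dS (iM m) - U (nabla m)).

Lemma U_ext (X : zmodType) (F1 F2 : TS -> X) :
  {morph F1 : x y / x + y} -> {morph F2 : x y / x + y} ->
  (forall b a m, F1 (pS (qM b) * dS (qM a) * pS (iM m)) =
                 F2 (pS (qM b) * dS (qM a) * pS (iM m))) ->
  forall x, F1 (U x) = F2 (U x).
Proof.
move=> F1D F2D Egen.
apply: (kaehler_tensor_additive_ext (F1 := F1 \o U) (F2 := F2 \o U) HOm Htns)
  => [x y|x y|b a m] /=; by rewrite ?UD ?F1D ?F2D ?U_tns.
Qed.

Section Vertical.
Variables (TTS : comAlgType R) (pT d' : TS -> TTS) (lam : TS -> S)
  (ell : TTS -> TS) (c : TTS -> TTS) (TK : TS -> TTS) (Tlam : TTS -> TS).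
Hypothesis HTTS : is_tangent_algebra pT d'.
Hypotheses (lamH : is_alg_hom lam) (lam_pq : forall a, lam (pS (qM a)) = qM a)
  (lam_pi : forall m, lam (pS (iM m)) = 0) (lam_dq : forall a, lam (dS (qM a)) = 0)
  (lam_di : forall m, lam (dS (iM m)) = iM m).
Hypotheses (TKH : is_alg_hom TK) (TK_p : forall x, TK (pS x) = pT (K x))
  (TK_d : forall x, TK (dS x) = d' (K x)).

Lemma lam_K x : lam (K x) = x.
Proof.
have lamU : forall x, lam (U x) = 0.
  apply: (U_ext (F2 := fun _ => 0) (alg_homD lamH)) => [y z|b a m].
    by rewrite /= addr0.
  by rewrite !(alg_homM lamH) lam_dq mulr0 mul0r.
apply: (sym_ext HS (alg_hom_comp KH lamH) (alg_hom_id S)) x => [a|m] /=.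
- by rewrite K_q lam_pq.
- by rewrite K_i (alg_homB lamH) lam_di lamU subr0.
Qed.

Lemma ell_TK : is_alg_hom ell ->
  (forall b, ell (pT (pS b)) = pS b) -> (forall b, ell (pT (dS b)) = 0) ->
  (forall b, ell (d' (pS b)) = 0) -> (forall b, ell (d' (dS b)) = dS b) ->
  forall y, ell (TK y) = K (lam y).
Proof.
move=> ellH ell_pp ell_pd ell_dp ell_dd; have [pTH d'H _] := HTTS.
have ell_pU : forall x, ell (pT (U x)) = 0.
  apply: (U_ext (F1 := ell \o pT) (F2 := fun _ => 0)) => [x y|x y|b a m] /=.
  - by rewrite (alg_homD pTH) (alg_homD ellH).
  - by rewrite addr0.
  - by rewrite !(alg_homM pTH) !(alg_homM ellH) ell_pd mulr0 mul0r.
have ell_dU : forall x, ell (d' (U x)) = U x.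
  apply: (U_ext (F1 := ell \o d') (F2 := id)) => [x y|//|b a m] /=.
  - by rewrite (derivD d'H) (alg_homD ellH).
  rewrite !(derivM d'H) !(alg_homM pTH) !(alg_homD ellH, alg_homM ellH).
  by rewrite !ell_pp !ell_pd !ell_dp !ell_dd; ring.
apply: (tangent_sym_ext HS HTS (alg_hom_comp TKH ellH) (alg_hom_comp lamH KH))
  => [a|m|a|m] /=.
- by rewrite TK_p K_q ell_pp lam_pq K_q.
- by rewrite TK_p K_i (alg_homB pTH) (alg_homB ellH) ell_pd ell_pU subr0 lam_pi
    (alg_hom0 KH).
- by rewrite TK_d K_q ell_dp lam_dq (alg_hom0 KH).
- by rewrite TK_d K_i (derivB d'H) (alg_homB ellH) ell_dd ell_dU lam_di K_i.
Qed.

Lemma Tlam_c_TK : is_alg_hom c ->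
  (forall b, c (pT (pS b)) = pT (pS b)) -> (forall b, c (pT (dS b)) = d' (pS b)) ->
  (forall b, c (d' (pS b)) = pT (dS b)) -> (forall b, c (d' (dS b)) = d' (dS b)) ->
  is_alg_hom Tlam -> (forall y, Tlam (pT y) = pS (lam y)) ->
  (forall y, Tlam (d' y) = dS (lam y)) ->
  forall y, Tlam (c (TK y)) = K (lam y).
Proof.
move=> cH c_pp c_pd c_dp c_dd TlamH Tlam_p Tlam_d; have [pTH d'H _] := HTTS.
have [pSH dSH _] := HTS.
have TcH := alg_hom_comp cH TlamH.
have Tc_pU : forall x, Tlam (c (pT (U x))) = 0.
  apply: (U_ext (F1 := Tlam \o c \o pT) (F2 := fun _ => 0)) => [x y|x y|b a m] /=.
  - by rewrite (alg_homD pTH) (alg_homD TcH).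
  - by rewrite addr0.
  - rewrite !(alg_homM pTH) !(alg_homM TcH) /= !c_pp !Tlam_p lam_pi.
    by rewrite (alg_hom0 pSH) mulr0.
have Tc_dU : forall x, Tlam (c (d' (U x))) = U x.
  apply: (U_ext (F1 := Tlam \o c \o d') (F2 := id)) => [x y|//|b a m] /=.
  - by rewrite (derivD d'H) (alg_homD TcH).
  rewrite !(derivM d'H) !(alg_homM pTH) !(alg_homD TcH, alg_homM TcH) /=.
  rewrite !c_pp !c_pd !c_dp !c_dd !Tlam_p !Tlam_d !lam_pq !lam_dq !lam_pi !lam_di.
  by rewrite (alg_hom0 pSH) (deriv0 dSH); ring.
apply: (tangent_sym_ext HS HTS (alg_hom_comp TKH TcH) (alg_hom_comp lamH KH))
  => [a|m|a|m] /=.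
- by rewrite TK_p K_q c_pp Tlam_p !lam_pq K_q.
- by rewrite TK_p K_i (alg_homB pTH) (alg_homB TcH) Tc_pU subr0 /= c_pd Tlam_d
    lam_pi (deriv0 dSH) (alg_hom0 KH).
- by rewrite TK_d K_q c_dp Tlam_p lam_dq (alg_hom0 pSH) (alg_hom0 KH).
- by rewrite TK_d K_i (derivB d'H) (alg_homB TcH) /= c_dd Tlam_d Tc_dU lam_di K_i.
Qed.
End Vertical.

Section Effective.
Variables (TA : comAlgType R) (pA dA : A -> TA)
  (P : comAlgType R) (j1 : TA -> P) (j2 j3 : S -> P).
Hypotheses (HTA : is_tangent_algebra pA dA)
  (HP : is_algebra_tensor3 pA qM qM j1 j2 j3)
  (Hnabla : is_module_connection dOm tns nabla).

Lemma exists_effective_inverse : exists Psi : TS -> P,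
  [/\ is_alg_hom Psi, forall b, Psi (pS b) = j2 b,
      forall a, Psi (dS (qM a)) = j1 (dA a) & forall m, Psi (K (iM m)) = j3 (iM m)].
Proof.
have [[j1H [j2H j3H]] j12 j23 _] := HP.
have [_ dAH _] := HTA.
have [qH iD iZ _] := HS.
have [_ _ TSU] := HTS.
have [nablaD [_ nablaZ]] := Hnabla.
have j2qH := alg_hom_comp qH j2H.
have deltaH : is_derivation_along (fun a => j2 (qM a)) (fun a => j1 (dA a)).
  exact: derivation_ext j12 (derivation_postcomp dAH j1H).
have j2iD : {morph (fun m => j2 (iM m)) : m m' / m + m'}.
  by move=> m m' /=; rewrite iD (alg_homD j2H).
have j2iZ a m : j2 (iM (a *: m)) = j2 (qM a) * j2 (iM m).
  by rewrite iZ (alg_homM j2H).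
have [U' [U'D U'Z U'_tns]] := kaehler_tensor_pairing HOm Htns j2qH deltaH j2iD j2iZ.
pose mu m := j3 (iM m) + U' (nabla m).
have muD : {morph mu : m m' / m + m'}.
  by move=> m m'; rewrite /mu iD (alg_homD j3H) nablaD U'D addrACA.
(* The Leibniz rule of [nabla] is what makes [D] well defined on [S_A(M)]. *)
have muZ a m : mu (a *: m) = j2 (qM a) * mu m + j1 (dA a) * j2 (iM m).
  rewrite /mu iZ (alg_homM j3H) nablaZ U'D U'Z -[dOm a]scale1r U'_tns /=.
  by rewrite -j23 (alg_hom1 j2qH); ring.
have [D [DH D_q D_i]] := sym_derivation_exists HS j2H deltaH muD muZ.
have [[Psi [PsiH Psi_p Psi_d]] _] := TSU P j2 D j2H DH.
have PsiU : forall x, Psi (U x) = U' x.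
  apply: (kaehler_tensor_additive_ext (F1 := fun x => Psi (U x)) (F2 := U')
    HOm Htns) => [x y|x y|b a m].
  - by rewrite UD (alg_homD PsiH).
  - exact: U'D.
  - by rewrite U_tns !(alg_homM PsiH) !Psi_p Psi_d D_q U'_tns.
exists Psi; split=> // [a|m]; first by rewrite Psi_d D_q.
by rewrite K_i (alg_homB PsiH) Psi_d D_i PsiU addrK.
Qed.

Lemma K_effective (TqM : TA -> TS) (Phi : P -> TS) :
  (forall a, TqM (pA a) = pS (qM a)) -> (forall a, TqM (dA a) = dS (qM a)) ->
  is_alg_hom Phi -> (forall w, Phi (j1 w) = TqM w) ->
  (forall v, Phi (j2 v) = pS v) -> (forall u, Phi (j3 u) = K u) ->
  bijective Phi.
Proof.
move=> TqM_p TqM_d PhiH Phi1 Phi2 Phi3.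
have [Psi [PsiH Psi_p Psi_dq Psi_K]] := exists_effective_inverse.
have [[j1H [j2H j3H]] j12 j23 PU] := HP.
have PhiPsiH := alg_hom_comp PsiH PhiH.
have PsiPhiH := alg_hom_comp PhiH PsiH.
exists Psi.
- apply: (PU _ _ _ _ j1H j2H j3H j12 j23).2 => //; split=> //.
  + apply: (tangent_ext HTA (alg_hom_comp j1H PsiPhiH) j1H) => a.
    * by rewrite Phi1 TqM_p Psi_p j12.
    * by rewrite Phi1 TqM_d Psi_dq.
  + by move=> v; rewrite Phi2 Psi_p.
  + apply: (sym_ext HS (alg_hom_comp j3H PsiPhiH) j3H) => [a|m].
    * by rewrite Phi3 K_q Psi_p j23.
    * by rewrite Phi3 Psi_K.
- have PhiPsiU : forall x, Phi (Psi (U x)) = U x.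
    apply: (U_ext (F2 := id) (alg_homD PhiPsiH)) => // b a m.
    by rewrite !(alg_homM PhiPsiH) !Psi_p !Phi2 Psi_dq Phi1 TqM_d.
  apply: (tangent_sym_ext HS HTS PhiPsiH (alg_hom_id TS)) => [a|m|a|m] /=.
  + by rewrite Psi_p Phi2.
  + by rewrite Psi_p Phi2.
  + by rewrite Psi_dq Phi1 TqM_d.
  + have -> : dS (iM m) = K (iM m) + U (nabla m) by rewrite K_i subrK.
    by rewrite (alg_homD PhiPsiH) Psi_K Phi3 PhiPsiU.
Qed.
End Effective.
End ConnectionMap.

Theorem mainTheorem3
  (R : comPzRingType) (A : comAlgType R) (M : lmodType A)
  (* Omega(A) with universal derivation dOm *)
  (Om : lmodType A) (dOm : A -> Om) (HOm : is_kaehler dOm)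
  (* Omega(A) (x)_A M *)
  (OM : lmodType A) (tns : Om -> M -> OM) (Htns : is_tensor_product tns)
  (* S_A(M) with q_M : A -> S_A(M) and the inclusion iM of M *)
  (S : comAlgType R) (qM : A -> S) (iM : M -> S) (HS : is_symmetric_algebra qM iM)
  (* T(A) *)
  (TA : comAlgType R) (pA dA : A -> TA) (HTA : is_tangent_algebra pA dA)
  (* T(S_A(M)) *)
  (TS : comAlgType R) (pS dS : S -> TS) (HTS : is_tangent_algebra pS dS)
  (* T^2(S_A(M)) = T(T(S_A(M))), with p_{T(S)} and d' *)
  (TTS : comAlgType R) (pT d' : TS -> TTS) (HTTS : is_tangent_algebra pT d')
  (* T(A) (x)_A S_A(M) (x)_A S_A(M) *)
  (P : comAlgType R) (j1 : TA -> P) (j2 j3 : S -> P)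
  (HP : is_algebra_tensor3 pA qM qM j1 j2 j3)
  (* the module connection *)
  (nabla : M -> OM) (Hnabla : is_module_connection dOm tns nabla)
  (* T(q_M) : T(A) -> T(S_A(M)) *)
  (TqM : TA -> TS)
  (HTqM : [/\ is_alg_hom TqM, forall a, TqM (pA a) = pS (qM a)
            & forall a, TqM (dA a) = dS (qM a)])
  (* U restricted to Omega(A) (x)_A M : (b d(a)) (x) m |-> T(q_M)(b d(a)) m *)
  (U : OM -> TS)
  (HU : (forall x y, U (x + y) = U x + U y) /\
        (forall (b a : A) (m : M),
           U (tns (b *: dOm a) m) = pS (qM b) * dS (qM a) * pS (iM m)))
  (* K_nabla *)
  (K : S -> TS)
  (HK : [/\ is_alg_hom K, forall a, K (qM a) = pS (qM a)
          & forall m, K (iM m) = dS (iM m) - U (nabla m)]) :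
  forall (lam : TS -> S) (ell : TTS -> TS) (c : TTS -> TTS)
         (TK : TS -> TTS) (Tlam : TTS -> TS),
  (* lambda_M *)
  [/\ is_alg_hom lam, forall a, lam (pS (qM a)) = qM a,
      forall m, lam (pS (iM m)) = 0, forall a, lam (dS (qM a)) = 0
    & forall m, lam (dS (iM m)) = iM m] ->
  (* ell_{S_A(M)} *)
  [/\ is_alg_hom ell, forall b, ell (pT (pS b)) = pS b,
      forall b, ell (pT (dS b)) = 0, forall b, ell (d' (pS b)) = 0
    & forall b, ell (d' (dS b)) = dS b] ->
  (* c_{S_A(M)} *)
  [/\ is_alg_hom c, forall b, c (pT (pS b)) = pT (pS b),
      forall b, c (pT (dS b)) = d' (pS b), forall b, c (d' (pS b)) = pT (dS b)
    & forall b, c (d' (dS b)) = d' (dS b)] ->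
  (* T(K) *)
  [/\ is_alg_hom TK, forall x, TK (pS x) = pT (K x) & forall x, TK (dS x) = d' (K x)] ->
  (* T(lambda_M) *)
  [/\ is_alg_hom Tlam, forall y, Tlam (pT y) = pS (lam y)
    & forall y, Tlam (d' y) = dS (lam y)] ->
  (* K is a vertical connection ... *)
  [/\ forall x, lam (K x) = x,
      forall a, K (qM a) = pS (qM a),
      forall y, ell (TK y) = K (lam y)
    & forall y, Tlam (c (TK y)) = K (lam y)] /\
  (* ... and it is effective *)
  (forall Phi : P -> TS,
     is_alg_hom Phi ->
     (forall w, Phi (j1 w) = TqM w) ->
     (forall v, Phi (j2 v) = pS v) ->
     (forall u, Phi (j3 u) = K u) ->
     bijective Phi).
Proof.
move=> lam ell c TK Tlam [lamH lam_pq lam_pi lam_dq lam_di]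
  [ellH ell_pp ell_pd ell_dp ell_dd] [cH c_pp c_pd c_dp c_dd] [TKH TK_p TK_d]
  [TlamH Tlam_p Tlam_d].
have [UD U_tns] := HU.
have [KH K_q K_i] := HK.
have [_ TqM_p TqM_d] := HTqM.
split; first split.
- exact: (lam_K HOm Htns HS UD U_tns KH K_q K_i lamH lam_pq lam_dq lam_di).
- exact: K_q.
- exact: (ell_TK HOm Htns HS HTS UD U_tns KH K_q K_i HTTS lamH lam_pq lam_pi
    lam_dq lam_di TKH TK_p TK_d ellH ell_pp ell_pd ell_dp ell_dd).
- exact: (Tlam_c_TK HOm Htns HS HTS UD U_tns KH K_q K_i HTTS lamH lam_pq lam_pi
    lam_dq lam_di TKH TK_p TK_d cH c_pp c_pd c_dp c_dd TlamH Tlam_p Tlam_d).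
- move=> Phi PhiH Phi1 Phi2 Phi3.
  exact: (K_effective HOm Htns HS HTS UD U_tns K_q K_i HTA HP Hnabla TqM_p TqM_d
    PhiH Phi1 Phi2 Phi3).
Qed.
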